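(* Let $T\in\mathcal{B}(V)$ and $s\in\rho_S(T)$ such that $\|T-\mathrm{Re}[s]\mathcal{I}\|<|s-\mathrm{Re}[s]|$. Then $$S^{-1}(s,T)=\sum_{n\ge0}(T-\mathrm{Re}[s]\mathcal{I})^n\,(s-\mathrm{Re}[s])^{-n-1},$$ the series converging in operator norm.
   Context: $V$ is a bilateral quaternionic Banach space: a real Banach space which is both a left and a right $\mathbb{H}$-vector space with $(av)b=a(vb)$ and $\|av\|=\|va\|=|a|\|v\|$. $\mathcal{B}(V)$ is the space of bounded right-linear operators on $V$; products denote composition, $\mathcal{I}$ is the identity. For $a\in\mathbb{H}$, $a\mathcal{I}$ is $v\mapsto av$, $aT:=(a\mathcal{I})T$, $Ta:=T(a\mathcal{I})$ (so $A^n b$ means $v\mapsto A^n(bv)$). $\sigma_S(T)=\{s: T^2-2\mathrm{Re}[s]T+|s|^2\mathcal{I}$ not invertible in $\mathcal{B}(V)\}$, $\rho_S(T)=\mathbb{H}\setminus\sigma_S(T)$, and for $s\in\rho_S(T)$, $S^{-1}(s,T)=-(T^2-2\mathrm{Re}[s]T+|s|^2\mathcal{I})^{-1}(T-\bar s\mathcal{I})$. *)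

From Stdlib Require Import Reals.
Open Scope R_scope.

Record quat : Type := Quat { q0 : R; q1 : R; q2 : R; q3 : R }.

Definition qreal (r : R) : quat := Quat r 0 0 0.
Definition qzero : quat := qreal 0.
Definition qone : quat := qreal 1.
Definition qadd (a b : quat) : quat :=
  Quat (q0 a + q0 b) (q1 a + q1 b) (q2 a + q2 b) (q3 a + q3 b).
Definition qopp (a : quat) : quat := Quat (- q0 a) (- q1 a) (- q2 a) (- q3 a).
Definition qsub (a b : quat) : quat := qadd a (qopp b).
Definition qmul (a b : quat) : quat :=
  Quat (q0 a * q0 b - q1 a * q1 b - q2 a * q2 b - q3 a * q3 b)
       (q0 a * q1 b + q1 a * q0 b + q2 a * q3 b - q3 a * q2 b)
       (q0 a * q2 b - q1 a * q3 b + q2 a * q0 b + q3 a * q1 b)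
       (q0 a * q3 b + q1 a * q2 b - q2 a * q1 b + q3 a * q0 b).
Definition qconj (a : quat) : quat := Quat (q0 a) (- q1 a) (- q2 a) (- q3 a).
Definition qnorm2 (a : quat) : R := q0 a ^ 2 + q1 a ^ 2 + q2 a ^ 2 + q3 a ^ 2.
Definition qnorm (a : quat) : R := sqrt (qnorm2 a).
Definition qRe (a : quat) : R := q0 a.
Definition qinv (a : quat) : quat :=
  let n := qnorm2 a in
  Quat (q0 a / n) (- q1 a / n) (- q2 a / n) (- q3 a / n).
Fixpoint qpow (a : quat) (n : nat) : quat :=
  match n with O => qone | S k => qmul a (qpow a k) end.

Record QBanach : Type := {
  car :> Type;
  vzero : car;
  vadd : car -> car -> car;
  vopp : car -> car;
  lmul : quat -> car -> car;
  rmul : car -> quat -> car;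
  vnorm : car -> R;
  vadd_assoc : forall u v w, vadd u (vadd v w) = vadd (vadd u v) w;
  vadd_comm : forall u v, vadd u v = vadd v u;
  vadd_0 : forall v, vadd v vzero = v;
  vadd_opp : forall v, vadd v (vopp v) = vzero;
  lmul_assoc : forall a b v, lmul (qmul a b) v = lmul a (lmul b v);
  lmul_addq : forall a b v, lmul (qadd a b) v = vadd (lmul a v) (lmul b v);
  lmul_addv : forall a u v, lmul a (vadd u v) = vadd (lmul a u) (lmul a v);
  lmul_1 : forall v, lmul qone v = v;
  rmul_assoc : forall a b v, rmul v (qmul a b) = rmul (rmul v a) b;
  rmul_addq : forall a b v, rmul v (qadd a b) = vadd (rmul v a) (rmul v b);
  rmul_addv : forall a u v, rmul (vadd u v) a = vadd (rmul u a) (rmul v a);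
  rmul_1 : forall v, rmul v qone = v;
  (* both quaternionic structures extend the same real vector space structure *)
  lrmul_real : forall (r : R) v, lmul (qreal r) v = rmul v (qreal r);
  lrmul_assoc : forall a b v, rmul (lmul a v) b = lmul a (rmul v b);
  vnorm_nonneg : forall v, 0 <= vnorm v;
  vnorm_eq0 : forall v, vnorm v = 0 -> v = vzero;
  vnorm_triangle : forall u v, vnorm (vadd u v) <= vnorm u + vnorm v;
  vnorm_lmul : forall a v, vnorm (lmul a v) = qnorm a * vnorm v;
  vnorm_rmul : forall a v, vnorm (rmul v a) = qnorm a * vnorm v;
  complete : forall u : nat -> car,
    (forall eps, eps > 0 -> exists N, forall m n, (m >= N)%nat -> (n >= N)%nat ->
        vnorm (vadd (u m) (vopp (u n))) < eps) ->
    exists l, forall eps, eps > 0 -> exists N, forall n, (n >= N)%nat ->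
        vnorm (vadd (u n) (vopp l)) < eps
}.

Arguments vzero {q}. Arguments vadd {q} _ _. Arguments vopp {q} _.
Arguments lmul {q} _ _. Arguments rmul {q} _ _. Arguments vnorm {q} _.

Section Ops.
Variable V : QBanach.

Definition is_BV (A : V -> V) : Prop :=
  (forall u v, A (vadd u v) = vadd (A u) (A v)) /\
  (forall v a, A (rmul v a) = rmul (A v) a) /\
  (exists C, forall v, vnorm (A v) <= C * vnorm v).

Definition opnorm_le (A : V -> V) (c : R) : Prop :=
  forall v, vnorm (A v) <= c * vnorm v.

Definition opnorm_lt (A : V -> V) (c : R) : Prop :=
  exists c', c' < c /\ opnorm_le A c'.

Definition op_sub (A B : V -> V) : V -> V := fun v => vadd (A v) (vopp (B v)).

Fixpoint op_pow (A : V -> V) (n : nat) : V -> V :=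
  match n with O => fun v => v | S k => fun v => A (op_pow A k v) end.

Definition Qs (T : V -> V) (s : quat) : V -> V :=
  fun v => vadd (vadd (T (T v)) (vopp (lmul (qreal (2 * qRe s)) (T v))))
                (lmul (qreal (qnorm s ^ 2)) v).

Definition inverse_in_BV (A B : V -> V) : Prop :=
  is_BV B /\ (forall v, A (B v) = v) /\ (forall v, B (A v) = v).

Definition in_rhoS (T : V -> V) (s : quat) : Prop :=
  exists B, inverse_in_BV (Qs T s) B.

Definition S_res (T Qi : V -> V) (s : quat) : V -> V :=
  fun v => vopp (Qi (vadd (T v) (vopp (lmul (qconj s) v)))).

Fixpoint vsum (f : nat -> V) (N : nat) : V :=
  match N with O => f O | S k => vadd (vsum f k) (f (S k)) end.

End Ops.

Arguments is_BV {V} _. Arguments opnorm_le {V} _ _. Arguments opnorm_lt {V} _ _.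
Arguments op_sub {V} _ _. Arguments op_pow {V} _ _. Arguments Qs {V} _ _.
Arguments inverse_in_BV {V} _ _. Arguments in_rhoS {V} _ _.
Arguments S_res {V} _ _ _. Arguments vsum {V} _ _.

(* Write r = Re[s], p = s - r (a purely imaginary quaternion), A = T - r I
   and q = p^{-1}.  Since p^2 = -|p|^2, the quadratic operator splits as
   Q_s(T) = A^2 + |p|^2 I, and T - conj(s) I = A + p.  For the partial sums
   P_N v = sum_{n<=N} A^n (q^{n+1} v) a telescoping computation gives
        Q_s(T) P_N v + (A v + p v) = A^{N+1}(q^N v) + A^{N+2}(q^{N+1} v),
   so applying Q_s(T)^{-1} yields P_N v - S^{-1}(s,T) v = Q_s(T)^{-1} E_N v,
   where E_N v is the right-hand side.  If ||A|| <= c < |p| then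
   ||E_N v|| <= c (1 + x) x^N ||v|| with x = c/|p| < 1, and the boundedness
   of Q_s(T)^{-1} makes the operator-norm error geometrically small. *)

From Stdlib Require Import Reals Lra Psatz.
Open Scope R_scope.

(** * Quaternion identities *)

Lemma qmul_assoc (a b c : quat) : qmul a (qmul b c) = qmul (qmul a b) c.
Proof. destruct a, b, c; unfold qmul; simpl; f_equal; ring. Qed.

Lemma qmul_one_r (a : quat) : qmul a qone = a.
Proof. destruct a; unfold qmul, qone, qreal; simpl; f_equal; ring. Qed.

Lemma qmul_opp_l (a b : quat) : qmul (qopp a) b = qopp (qmul a b).
Proof. destruct a, b; unfold qmul, qopp; simpl; f_equal; ring. Qed.

Lemma qmul_inv_r (p : quat) : qnorm2 p <> 0 -> qmul p (qinv p) = qone.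
Proof.
  destruct p as [a b c d]; cbv [qnorm2 qinv qmul qone qreal q0 q1 q2 q3].
  intro Hp; f_equal; field; exact Hp.
Qed.

Lemma qmul_inv_l (p : quat) : qnorm2 p <> 0 -> qmul (qinv p) p = qone.
Proof.
  destruct p as [a b c d]; cbv [qnorm2 qinv qmul qone qreal q0 q1 q2 q3].
  intro Hp; f_equal; field; exact Hp.
Qed.

(* For a purely imaginary p one has p^2 = -|p|^2, i.e. |p|^2 p^{-1} = -p. *)
Lemma qpure_norm2_inv (p : quat) :
  q0 p = 0 -> qnorm2 p <> 0 -> qmul (qreal (qnorm2 p)) (qinv p) = qopp p.
Proof.
  destruct p as [a b c d]; cbv [qnorm2 qinv qmul qopp qreal q0 q1 q2 q3].
  intros -> Hp; f_equal; field; contradict Hp; lra.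
Qed.

(* The recursion behind the telescoping: b2 q^2 = -1 when b2 q = -p, p q = 1. *)
Lemma qscaled_square_step (b2 : R) (p q x : quat) :
  qmul (qreal b2) q = qopp p -> qmul p q = qone ->
  qmul (qreal b2) (qmul q (qmul q x)) = qopp x.
Proof.
  intros Hb2 Hpq.
  rewrite !qmul_assoc, Hb2, qmul_opp_l, Hpq.
  destruct x; unfold qmul, qopp, qone, qreal; simpl; f_equal; ring.
Qed.

Lemma qnorm2_nonneg (a : quat) : 0 <= qnorm2 a.
Proof. unfold qnorm2; nra. Qed.

Lemma qnorm_mul (a b : quat) : qnorm (qmul a b) = qnorm a * qnorm b.
Proof.
  unfold qnorm; rewrite <- sqrt_mult by apply qnorm2_nonneg; f_equal.
  destruct a, b; unfold qnorm2, qmul; simpl; ring.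
Qed.

Lemma qnorm_one : qnorm qone = 1.
Proof.
  unfold qnorm, qnorm2, qone, qreal; simpl.
  transitivity (sqrt 1); [f_equal; ring | apply sqrt_1].
Qed.

Lemma qnorm_pow (a : quat) (n : nat) : qnorm (qpow a n) = qnorm a ^ n.
Proof.
  induction n as [|n IH]; simpl; [apply qnorm_one | now rewrite qnorm_mul, IH].
Qed.

Lemma qnorm_inv (p : quat) : qnorm2 p <> 0 -> qnorm (qinv p) = / qnorm p.
Proof.
  intro Hp.
  assert (Hprod : qnorm (qinv p) * qnorm p = 1)
    by now rewrite <- qnorm_mul, qmul_inv_l, qnorm_one.
  assert (Hpos : qnorm p <> 0)
    by (unfold qnorm; intro H0; apply Hp, sqrt_eq_0; [apply qnorm2_nonneg | exact H0]).
  apply (Rmult_eq_reg_r (qnorm p)); [rewrite Rinv_l; [exact Hprod|] |]; exact Hpos.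
Qed.

(** * Real-linear algebra in a bilateral quaternionic Banach space *)

Section VectorAlgebra.
Variable V : QBanach.

Lemma vadd_0l (v : V) : vadd vzero v = v.
Proof. rewrite vadd_comm; apply vadd_0. Qed.

Lemma vadd_oppl (v : V) : vadd (vopp v) v = vzero.
Proof. rewrite vadd_comm; apply vadd_opp. Qed.

Lemma vadd_cancel_l (u v w : V) : vadd u v = vadd u w -> v = w.
Proof.
  intro H.
  rewrite <- (vadd_0l v), <- (vadd_0l w), <- (vadd_oppl u), <- !vadd_assoc, H.
  reflexivity.
Qed.

Lemma vopp_unique (u v : V) : vadd u v = vzero -> v = vopp u.
Proof. intro H; apply (vadd_cancel_l u); now rewrite H, vadd_opp. Qed.

Lemma vopp_opp (u : V) : vopp (vopp u) = u.
Proof. symmetry; apply vopp_unique, vadd_oppl. Qed.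

Lemma vadd_swap_mid (a b c d : V) :
  vadd (vadd a b) (vadd c d) = vadd (vadd a c) (vadd b d).
Proof. rewrite <- !vadd_assoc; f_equal; rewrite !vadd_assoc; f_equal; apply vadd_comm. Qed.

Lemma vopp_add (u v : V) : vopp (vadd u v) = vadd (vopp u) (vopp v).
Proof.
  symmetry; apply vopp_unique.
  now rewrite vadd_swap_mid, !vadd_opp, vadd_0.
Qed.

Lemma vadd_cancel_outer (a b c : V) :
  vadd (vadd a b) (vadd c (vopp a)) = vadd b c.
Proof.
  rewrite (vadd_comm _ c), vadd_swap_mid, vadd_opp, vadd_0l.
  reflexivity.
Qed.

Definition additive (A : V -> V) : Prop :=
  forall u v, A (vadd u v) = vadd (A u) (A v).

Definition real_homogeneous (A : V -> V) : Prop :=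
  forall (x : R) v, A (lmul (qreal x) v) = lmul (qreal x) (A v).

Lemma additive_zero (A : V -> V) : additive A -> A vzero = vzero.
Proof. intro H; apply (vadd_cancel_l (A vzero)); now rewrite <- H, !vadd_0. Qed.

Lemma additive_opp (A : V -> V) : additive A -> forall v, A (vopp v) = vopp (A v).
Proof. intros H v; apply vopp_unique; rewrite <- H, vadd_opp; now apply additive_zero. Qed.

Lemma lmul_additive (a : quat) : additive (lmul a).
Proof. intros u v; apply lmul_addv. Qed.

Lemma lmul_qzero (v : V) : lmul qzero v = vzero.
Proof.
  apply (vadd_cancel_l (lmul qzero v)); rewrite <- lmul_addq, vadd_0.
  f_equal; unfold qadd, qzero, qreal; simpl; f_equal; ring.
Qed.

Lemma lmul_qopp (a : quat) (v : V) : lmul (qopp a) v = vopp (lmul a v).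
Proof.
  apply vopp_unique; rewrite <- lmul_addq, <- (lmul_qzero v).
  f_equal; destruct a; unfold qadd, qopp, qzero, qreal; simpl; f_equal; ring.
Qed.

Lemma vopp_lmul (v : V) : vopp v = lmul (qreal (-1)) v.
Proof.
  rewrite <- (lmul_1 _ v) at 1; rewrite <- lmul_qopp.
  f_equal; unfold qopp, qone, qreal; simpl; f_equal; ring.
Qed.

Lemma lmul_real_add (a b : R) (v : V) :
  vadd (lmul (qreal a) v) (lmul (qreal b) v) = lmul (qreal (a + b)) v.
Proof. rewrite <- lmul_addq; f_equal; unfold qadd, qreal; simpl; f_equal; ring. Qed.

Lemma lmul_real_mul (a b : R) (v : V) :
  lmul (qreal a) (lmul (qreal b) v) = lmul (qreal (a * b)) v.
Proof. rewrite <- lmul_assoc; f_equal; unfold qmul, qreal; simpl; f_equal; ring. Qed.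

Lemma vopp_lmul_real (a : R) (v : V) :
  vopp (lmul (qreal a) v) = lmul (qreal (- a)) v.
Proof. rewrite vopp_lmul, lmul_real_mul; f_equal; f_equal; ring. Qed.

Lemma op_pow_additive (A : V -> V) (n : nat) : additive A -> additive (op_pow A n).
Proof. intro H; induction n as [|n IH]; intros u v; simpl; [|rewrite IH]; auto. Qed.

Lemma op_pow_real_homogeneous (A : V -> V) (n : nat) :
  real_homogeneous A -> real_homogeneous (op_pow A n).
Proof. intro H; induction n as [|n IH]; intros x v; simpl; [|rewrite IH]; auto. Qed.

(* Right linearity makes a bounded operator commute with real scalars,
   because real scalars act identically from both sides. *)
Lemma is_BV_real_homogeneous (T : V -> V) : is_BV T -> real_homogeneous T.
Proof. intros [_ [HT _]] x v; now rewrite lrmul_real, HT, lrmul_real. Qed.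

Lemma shift_additive (T : V -> V) (r : R) :
  is_BV T -> additive (op_sub T (lmul (qreal r))).
Proof.
  intros [HT _] u v; unfold op_sub.
  now rewrite HT, lmul_addv, vopp_add, vadd_swap_mid.
Qed.

Lemma shift_real_homogeneous (T : V -> V) (r : R) :
  is_BV T -> real_homogeneous (op_sub T (lmul (qreal r))).
Proof.
  intros HT x v; unfold op_sub.
  rewrite (is_BV_real_homogeneous T HT), lmul_addv,
    (additive_opp _ (lmul_additive _)), !lmul_real_mul.
  now replace (r * x) with (x * r) by ring.
Qed.

End VectorAlgebra.

(** * Splitting Q_s(T) around the real part of s *)

(* Q_s(T) = (T - Re[s] I)^2 + |s - Re[s]|^2 I, from |s|^2 = Re[s]^2 + |s - Re[s]|^2. *)
Lemma Qs_split (V : QBanach) (T : V -> V) (s : quat) : is_BV T ->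
  forall x, Qs T s x =
    vadd (op_sub T (lmul (qreal (qRe s))) (op_sub T (lmul (qreal (qRe s))) x))
         (lmul (qreal (qnorm2 (qsub s (qreal (qRe s))))) x).
Proof.
  intros HT x; unfold Qs, op_sub.
  set (r := qRe s).
  assert (HTadd : additive V T) by exact (proj1 HT).
  rewrite HTadd, (additive_opp _ _ HTadd), (is_BV_real_homogeneous _ _ HT), lmul_addv,
    (additive_opp _ _ (lmul_additive _ _)), vopp_add, vopp_opp, lmul_real_mul,
    !vopp_lmul_real.
  set (X := T (T x)); set (P := lmul (qreal (- r)) (T x)); set (Q := lmul (qreal (r * r)) x).
  rewrite (vadd_assoc _ (vadd X P) P Q), <- (vadd_assoc _ X P P),
    <- (vadd_assoc _ (vadd X (vadd P P)) Q).
  unfold P, Q; rewrite !lmul_real_add.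
  unfold qnorm; rewrite pow2_sqrt by apply qnorm2_nonneg.
  f_equal; [do 3 f_equal | do 2 f_equal]; unfold r; destruct s;
    unfold qnorm2, qsub, qadd, qopp, qreal, qRe; simpl; ring.
Qed.

(* T - conj(s) I = (T - Re[s] I) + (s - Re[s]), since conj(s) = Re[s] - (s - Re[s]). *)
Lemma conj_split (V : QBanach) (T : V -> V) (s : quat) (v : V) :
  vadd (T v) (vopp (lmul (qconj s) v)) =
  vadd (op_sub T (lmul (qreal (qRe s))) v) (lmul (qsub s (qreal (qRe s))) v).
Proof.
  unfold op_sub; rewrite <- vadd_assoc, <- !lmul_qopp, <- lmul_addq.
  do 3 f_equal; destruct s; unfold qadd, qopp, qsub, qreal, qconj, qRe; simpl; f_equal; ring.
Qed.

(** * The telescoping identity *)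

Definition partial_sum {V : QBanach} (A : V -> V) (q : quat) (v : V) (N : nat) : V :=
  vsum (fun n => op_pow A n (lmul (qpow q (S n)) v)) N.

Definition remainder {V : QBanach} (A : V -> V) (q : quat) (v : V) (N : nat) : V :=
  vadd (op_pow A (S N) (lmul (qpow q N) v))
       (op_pow A (S (S N)) (lmul (qpow q (S N)) v)).

Section Telescoping.
Variable V : QBanach.
Variable A : V -> V.
Hypothesis HA_add : additive V A.
Hypothesis HA_real : real_homogeneous V A.
Variables (b2 : R) (p q : quat).
Hypothesis Hb2 : qmul (qreal b2) q = qopp p.
Hypothesis Hpq : qmul p q = qone.

Lemma telescoping (v : V) (N : nat) :
  vadd (vadd (A (A (partial_sum A q v N))) (lmul (qreal b2) (partial_sum A q v N)))
       (vadd (A v) (lmul p v))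
  = remainder A q v N.
Proof.
  induction N as [|N IH].
  - unfold partial_sum, remainder; simpl.
    rewrite qmul_one_r, lmul_1, <- lmul_assoc, Hb2, lmul_qopp,
      (vadd_comm _ (A v)), vadd_assoc, <- (vadd_assoc _ _ (vopp _)), vadd_oppl, vadd_0.
    apply vadd_comm.
  - set (t := op_pow A (S N) (lmul (qpow q (S (S N))) v)).
    assert (Hsum : partial_sum A q v (S N) = vadd (partial_sum A q v N) t) by reflexivity.
    (* the b2-part of the new term cancels the oldest term of E_N *)
    assert (Hcancel : lmul (qreal b2) t = vopp (op_pow A (S N) (lmul (qpow q N) v))).
    { unfold t; rewrite <- (op_pow_real_homogeneous _ _ _ HA_real), <- lmul_assoc.
      simpl qpow; rewrite (qscaled_square_step b2 p q), lmul_qopp by assumption.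
      apply (additive_opp _ _ (op_pow_additive _ _ _ HA_add)). }
    rewrite Hsum, !HA_add, lmul_addv, (vadd_swap_mid _ (A (A (partial_sum A q v N)))),
      <- vadd_assoc, (vadd_comm _ (vadd (A (A t)) _)), vadd_assoc, IH, Hcancel.
    unfold remainder; rewrite vadd_cancel_outer; reflexivity.
Qed.

End Telescoping.

Lemma partial_sum_error (V : QBanach) (T Qi : V -> V) (s : quat) (N : nat) (v : V) :
  is_BV T -> inverse_in_BV (Qs T s) Qi ->
  qnorm2 (qsub s (qreal (qRe s))) <> 0 ->
  op_sub (fun w => partial_sum (op_sub T (lmul (qreal (qRe s))))
                     (qinv (qsub s (qreal (qRe s)))) w N) (S_res T Qi s) v
  = Qi (remainder (op_sub T (lmul (qreal (qRe s))))
                  (qinv (qsub s (qreal (qRe s)))) v N).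
Proof.
  intros HT [[HQi_add _] [_ HQi_left]] Hp.
  set (A := op_sub T (lmul (qreal (qRe s)))).
  set (p := qsub s (qreal (qRe s))) in *.
  assert (Hpure : q0 p = 0) by (unfold p, qsub, qadd, qopp, qreal, qRe; simpl; ring).
  unfold op_sub at 1, S_res; rewrite conj_split, vopp_opp.
  rewrite <- (telescoping V A (shift_additive V T _ HT) (shift_real_homogeneous V T _ HT)
                (qnorm2 p) p (qinv p) (qpure_norm2_inv p Hpure Hp) (qmul_inv_r p Hp)).
  now rewrite <- (Qs_split V T s HT), !HQi_add, HQi_left.
Qed.

(** * Norm estimates *)

Lemma op_pow_bound (V : QBanach) (A : V -> V) (c : R) :
  0 <= c -> opnorm_le A c -> forall n w, vnorm (op_pow A n w) <= c ^ n * vnorm w.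
Proof.
  intros Hc HA n; induction n as [|n IH]; intro w; simpl; [lra|].
  eapply Rle_trans; [apply HA|]; rewrite Rmult_assoc; apply Rmult_le_compat_l; auto.
Qed.

Lemma remainder_bound (V : QBanach) (A : V -> V) (c : R) (q : quat) (v : V) (N : nat) :
  0 <= c -> opnorm_le A c ->
  vnorm (remainder A q v N)
  <= c * (1 + c * qnorm q) * (c * qnorm q) ^ N * vnorm v.
Proof.
  intros Hc HA; unfold remainder.
  eapply Rle_trans; [apply vnorm_triangle|].
  eapply Rle_trans; [apply Rplus_le_compat; apply (op_pow_bound V A c Hc HA)|].
  rewrite !vnorm_lmul, !qnorm_pow, Rpow_mult_distr; apply Req_le; simpl; ring.
Qed.

Lemma ratio_below_one (c : R) (p : quat) :
  0 <= c < qnorm p -> 0 <= c * qnorm (qinv p) < 1.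
Proof.
  intros [Hc0 Hc].
  assert (Hp : qnorm2 p <> 0) by (intro H0; unfold qnorm in Hc; rewrite H0, sqrt_0 in Hc; lra).
  assert (Hpos : 0 < qnorm p) by lra.
  rewrite qnorm_inv by exact Hp; split.
  - apply Rmult_le_pos; [lra | left; apply Rinv_0_lt_compat, Hpos].
  - apply (Rmult_lt_reg_r (qnorm p)); [exact Hpos|].
    rewrite Rmult_assoc, Rinv_l; lra.
Qed.

Lemma is_BV_bound (V : QBanach) (A : V -> V) :
  is_BV A -> exists K, 0 <= K /\ opnorm_le A K.
Proof.
  intros [_ [_ [C HC]]]; exists (Rabs C); split; [apply Rabs_pos|].
  intro v; eapply Rle_trans; [apply HC|].
  apply Rmult_le_compat_r; [apply vnorm_nonneg | apply Rle_abs].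
Qed.

(* A negative operator bound forces V = 0, where every operator bound holds. *)
Lemma opnorm_le_negative (V : QBanach) (A B : V -> V) (c e : R) :
  c < 0 -> opnorm_le A c -> opnorm_le B e.
Proof.
  intros Hc HA.
  assert (Hzero : forall w : V, vnorm w = 0).
  { intro w; specialize (HA w).
    pose proof (vnorm_nonneg V (A w)); pose proof (vnorm_nonneg V w); nra. }
  intro v; rewrite !Hzero; lra.
Qed.

Lemma geometric_eventually_small (M x eps : R) :
  0 <= x < 1 -> 0 < eps -> exists N0, forall N, (N >= N0)%nat -> M * x ^ N <= eps.
Proof.
  intros Hx Heps.
  set (a := Rabs M).
  assert (Ha : 0 <= a) by apply Rabs_pos.
  destruct (pow_lt_1_zero x ltac:(rewrite Rabs_pos_eq; lra) (eps / (a + 1)))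
    as [N0 HN0]; [apply Rdiv_lt_0_compat; lra|].
  exists N0; intros N HN.
  assert (HxN : 0 <= x ^ N) by (apply pow_le; lra).
  specialize (HN0 N HN); rewrite Rabs_pos_eq in HN0 by exact HxN.
  assert (Hsmall : 0 < eps / (a + 1)) by (apply Rdiv_lt_0_compat; lra).
  assert (Hshrink : a * (eps / (a + 1)) = eps - eps / (a + 1)) by (field; lra).
  apply Rle_trans with (a * x ^ N);
    [apply Rmult_le_compat_r; [exact HxN | apply Rle_abs] | nra].
Qed.

Theorem theorem4p11 (V : QBanach) (T : V -> V) (s : quat)
  (HT : is_BV T)
  (Hs : in_rhoS T s)
  (Hnorm : opnorm_lt (op_sub T (lmul (qreal (qRe s))))
                     (qnorm (qsub s (qreal (qRe s)))))
  (Qi : V -> V) (HQi : inverse_in_BV (Qs T s) Qi) :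
  forall eps, eps > 0 -> exists N0 : nat, forall N, (N >= N0)%nat ->
    opnorm_le
      (op_sub
         (fun v => vsum (fun n => op_pow (op_sub T (lmul (qreal (qRe s)))) n
                           (lmul (qpow (qinv (qsub s (qreal (qRe s)))) (S n)) v)) N)
         (S_res T Qi s))
      eps.
Proof.
  intros eps Heps.
  destruct Hnorm as [c [Hc HAc]].
  destruct (Rlt_or_le c 0) as [Hneg | Hc0].
  { exists 0%nat; intros N _; exact (opnorm_le_negative V _ _ c eps Hneg HAc). }
  set (p := qsub s (qreal (qRe s))) in *.
  assert (Hp : qnorm2 p <> 0) by (intro H0; unfold qnorm in Hc; rewrite H0, sqrt_0 in Hc; lra).
  set (x := c * qnorm (qinv p)).
  assert (Hx : 0 <= x < 1) by (apply ratio_below_one; lra).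
  destruct (is_BV_bound V Qi (proj1 HQi)) as [K [HK HQiK]].
  destruct (geometric_eventually_small (K * (c * (1 + x))) x eps Hx Heps) as [N0 HN0].
  exists N0; intros N HN v.
  change (vnorm (op_sub (fun w => partial_sum (op_sub T (lmul (qreal (qRe s))))
                                   (qinv (qsub s (qreal (qRe s)))) w N)
                        (S_res T Qi s) v) <= eps * vnorm v).
  rewrite (partial_sum_error V T Qi s N v HT HQi Hp).
  eapply Rle_trans; [apply HQiK|].
  eapply Rle_trans; [apply Rmult_le_compat_l; [exact HK | apply (remainder_bound V _ c); assumption]|].
  specialize (HN0 N HN); pose proof (vnorm_nonneg V v).
  apply Rle_trans with (K * (c * (1 + x)) * x ^ N * vnorm v);
    [apply Req_le; unfold x, p; ring | apply Rmult_le_compat_r; assumption].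
Qed.
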